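(* For every $n\ge 1$, no orientation $\overrightarrow{K_{1,n}}$ of the star $K_{1,n}$ is $\{2\}$-antimagic.
   Context: An oriented graph $\overrightarrow{G}$ is a directed graph obtained from a simple undirected graph by giving each edge one direction. For vertices $u,v$, $d(u,v)$ is the length of a shortest directed path from $u$ to $v$ ($d(u,u)=0$, and $d(u,v)=\infty$ if there is no such path). Let $\partial=\max\{d(u,v)<\infty : u,v\in V(\overrightarrow{G})\}$. A distance set is a nonempty $D\subseteq\{0,1,\dots,\partial\}$. The $D$-neighborhood of $u$ is $N_D(u)=\{v : d(u,v)\in D\}$. For a bijection $f:V(\overrightarrow{G})\to\{1,\dots,|V(\overrightarrow{G})|\}$, the $D$-weight of $u$ is $\omega_D(u)=\sum_{v\in N_D(u)} f(v)$ (empty sum $=0$). $\overrightarrow{G}$ is $D$-antimagic if $D\subseteq\{0,\dots,\partial\}$ and there is such a bijection $f$ with all $D$-weights pairwise distinct. *)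

From mathcomp Require Import all_boot.
Set Implicit Arguments. Unset Strict Implicit. Unset Printing Implicit Defensive.

Section Oriented.
Variable T : finType.
Variable arc : rel T.

Definition is_orientation_of (e : rel T) : Prop :=
  forall u v, (arc u v || arc v u) = e u v /\ ~~ (arc u v && arc v u).

Fixpoint walk (k : nat) (u v : T) : bool :=
  match k with
  | 0 => u == v
  | k'.+1 => [exists w, arc u w && walk k' w v]
  end.

Definition is_dist (u v : T) (k : nat) : bool :=
  walk k u v && [forall j : 'I_k, ~~ walk j u v].

(* k <= ∂, where ∂ = max of the finite distances *)
Definition le_diam (k : nat) : Prop :=
  exists u v m, is_dist u v m /\ k <= m.

Definition ND (D : seq nat) (u : T) : {set T} :=
  [set v | [exists i : 'I_(size D), is_dist u v (nth 0 D i)]].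

Definition is_labeling (f : T -> nat) : Prop :=
  injective f /\ forall x, 0 < f x <= #|T|.

Definition Dweight (D : seq nat) (f : T -> nat) (u : T) : nat :=
  \sum_(v in ND D u) f v.

Definition D_antimagic (D : seq nat) : Prop :=
  D != [::] /\ (forall k, k \in D -> le_diam k) /\
  exists f, is_labeling f /\ injective (Dweight D f).

End Oriented.

Definition star_edge (n : nat) : rel 'I_n.+1 :=
  fun u v => ((val u == 0) && (val v != 0)) || ((val v == 0) && (val u != 0)).
Arguments star_edge n : clear implicits.

From mathcomp Require Import all_boot.

(* In an oriented star every 2-walk goes leaf -> centre -> leaf, so the centre
   has an empty {2}-neighbourhood.  If the centre has an out-neighbour v, then v
   cannot walk on past the centre either; otherwise no leaf can.  Either way a
   leaf and the centre both have {2}-weight 0, whatever the labeling. *)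

Set Implicit Arguments. Unset Strict Implicit. Unset Printing Implicit Defensive.

Section Walks.
Variables (T : finType) (arc : rel T).

Lemma walk2P (u v : T) :
  reflect (exists2 w, arc u w & arc w v) (walk arc 2 u v).
Proof.
apply: (iffP existsP) => [[w /andP [uw /existsP [x /andP [wx /eqP <-]]]] | [w uw wv]].
  by exists w.
by exists w; rewrite uw; apply/existsP; exists v; rewrite wv eqxx.
Qed.

Lemma Dweight2_eq0 (f : T -> nat) (u : T) :
  (forall v, ~~ walk arc 2 u v) -> Dweight arc [:: 2] f u = 0.
Proof.
move=> no_walk; rewrite /Dweight.
suff -> : ND arc [:: 2] u = set0 by rewrite big_set0.
apply/setP => v; rewrite !inE; apply/negbTE/existsP => -[i].
by rewrite (ord1 i) /is_dist (negbTE (no_walk v)).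
Qed.

End Walks.

Section OrientedStar.
Variables (n : nat) (arc : rel 'I_n.+1).
Hypothesis orient : is_orientation_of arc (star_edge n).

Let centre : 'I_n.+1 := ord0.

Lemma star_arc_asym (u v : 'I_n.+1) : arc u v -> ~~ arc v u.
Proof. by move=> uv; have [_] := orient u v; rewrite uv. Qed.

Lemma star_arc_edge (u v : 'I_n.+1) : arc u v -> star_edge n u v.
Proof. by move=> uv; have [<- _] := orient u v; rewrite uv. Qed.

Lemma star_arc_from_leaf (u v : 'I_n.+1) : u != centre -> arc u v -> v = centre.
Proof.
move=> u_leaf /star_arc_edge; rewrite /star_edge -[val u == 0]/(u == centre).
by rewrite (negbTE u_leaf) => /andP [v0 _]; apply: val_inj; apply/eqP.
Qed.

Lemma star_arc_from_centre (v : 'I_n.+1) : arc centre v -> v != centre.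
Proof. by move/star_arc_edge; rewrite /star_edge /= andbF orbF. Qed.

Lemma star_no_walk2_centre (v : 'I_n.+1) : ~~ walk arc 2 centre v.
Proof.
apply/walk2P => -[w cw wv].
move: (star_arc_from_leaf (star_arc_from_centre cw) wv) => vc; subst v.
by move/negP: (star_arc_asym cw).
Qed.

Lemma star_no_walk2_out (u v : 'I_n.+1) : arc centre u -> ~~ walk arc 2 u v.
Proof.
move=> cu; apply/walk2P => -[w uw _].
move: (star_arc_from_leaf (star_arc_from_centre cu) uw) => wc; subst w.
by move/negP: (star_arc_asym cu).
Qed.

Lemma star_no_walk2_leaf (u v : 'I_n.+1) :
  (forall x, ~~ arc centre x) -> u != centre -> ~~ walk arc 2 u v.
Proof.
move=> no_out u_leaf; apply/walk2P => -[w uw wv].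
by move: wv; rewrite (star_arc_from_leaf u_leaf uw) (negbTE (no_out v)).
Qed.

Lemma star_leaf_without_walk2 :
  0 < n -> exists2 u : 'I_n.+1, u != centre & forall v, ~~ walk arc 2 u v.
Proof.
move=> n_gt0; have [v cv | no_out] := pickP (arc centre).
  by exists v; [exact: star_arc_from_centre | move=> x; exact: star_no_walk2_out].
exists (Ordinal (n_gt0 : 1 < n.+1)) => // x.
by apply: star_no_walk2_leaf => // y; rewrite no_out.
Qed.

End OrientedStar.

Theorem mainTheorem3 (n : nat) (hn : 1 <= n) (arc : rel 'I_n.+1)
  (Hor : is_orientation_of arc (star_edge n)) :
  ~ D_antimagic arc [:: 2].
Proof.
move=> [_ [_ [f [_ weight_inj]]]].
have [u u_leaf u_no_walk] := star_leaf_without_walk2 Hor hn.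
move/negP: u_leaf; apply; apply/eqP/weight_inj.
by rewrite !Dweight2_eq0 //; exact: star_no_walk2_centre.
Qed.
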